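(* Let $R$ be a ring, $n \in \mathbb{N}$, and $S_1,\dots,S_n$ sets with $|S_i| \geq \aleph_{i-1}$ for each $i$. For each $i \in [n]$ let \[v_i: \prod_{j \in [n]\setminus\{i\}} S_j \to \mathrm{Hom}^{\mathrm{fin}}_{\mathrm{Set}}\Big(\prod_{j \in [n]} S_j, R\Big)\] be an arbitrary map of sets. Then there exists $s \in \prod_{j \in [n]} S_j$ such that $v_i(p^n_i(s))(s) = 0$ for every $i \in [n]$.
   Context: $[n]=\{1,\dots,n\}$. For a set $T$ and ring $R$, $\mathrm{Hom}^{\mathrm{fin}}_{\mathrm{Set}}(T,R)$ is the set of functions $T \to R$ that vanish outside a finite subset of $T$. For $s = (s_1,\dots,s_n) \in \prod_{j \in [n]} S_j$, $p^n_i(s) = (s_1,\dots,s_{i-1},s_{i+1},\dots,s_n) \in \prod_{j \neq i} S_j$ is the point with the $i$-th coordinate omitted. *)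

From HB Require Import structures.
From mathcomp Require Import all_boot all_algebra.
From Stdlib Require Import List Wellfounded.

Set Implicit Arguments.
Unset Strict Implicit.
Unset Printing Implicit Defensive.

Definition well_order (T : Type) (lt : T -> T -> Prop) : Prop :=
  (forall x y z, lt x y -> lt y z -> lt x z) /\
  (forall x y, x = y \/ lt x y \/ lt y x) /\
  well_founded lt.

Definition card_le (A B : Type) : Prop :=
  exists f : A -> B, forall x y, f x = f y -> x = y.

(* is_aleph k T : T has cardinality exactly aleph_k.
   aleph_0 : T is in bijection with nat.
   aleph_(k+1) : T carries a well-order whose proper initial segments all have
   cardinality <= aleph_k while T itself does not (i.e. T has order type
   omega_(k+1), the least ordinal of cardinality > aleph_k). *)
Fixpoint is_aleph (k : nat) (T : Type) : Prop :=
  match k with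
  | 0 => exists f : nat -> T,
           (forall x y, f x = f y -> x = y) /\ (forall t, exists m, f m = t)
  | k'.+1 => exists lt : T -> T -> Prop,
      well_order lt /\
      (forall t : T, exists U : Type, is_aleph k' U /\ card_le {x : T | lt x t} U) /\
      ~ (exists U : Type, is_aleph k' U /\ card_le T U)
  end.

Definition ge_aleph (k : nat) (S : Type) : Prop :=
  exists U : Type, is_aleph k U /\ card_le U S.

Definition prodS (n : nat) (S : 'I_n -> Type) : Type := forall j : 'I_n, S j.

Definition prodS_omit (n : nat) (S : 'I_n -> Type) (i : 'I_n) : Type :=
  forall j : {j : 'I_n | j != i}, S (val j).

Definition proj_omit (n : nat) (S : 'I_n -> Type) (i : 'I_n) (s : prodS S) :
  prodS_omit S i := fun j => s (val j).

(* f : T -> R vanishes outside a finite subset of T (element of Hom^fin(T,R)). *)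
Definition fin_supp (T : Type) (R : pzRingType) (f : T -> R) : Prop :=
  exists l : list T, forall t, f t <> 0%R -> In t l.

(** The point is built from the last coordinate down.  Once the coordinates
  above [m] are fixed, the value of coordinate [m] is chosen outside the
  forbidden sets attached to all possible choices of the lower coordinates.
  There are at most aleph_(m-1) such choices (a single one for [m = 0]), each
  forbidding finitely many values, so fewer than aleph_m values are excluded
  and [|S_m| >= aleph_m] leaves room.  Choosing the lower coordinates
  afterwards cannot invalidate coordinate [m]. *)

From mathcomp Require Import all_boot all_algebra.
From Stdlib Require Import List Wellfounded Wf_nat FinFun.
From Stdlib Require Import ClassicalEpsilon Classical FunctionalExtensionality ProofIrrelevance.

Set Implicit Arguments.
Unset Strict Implicit.
Unset Printing Implicit Defensive.

Local Notation cid := (@constructive_indefinite_description _ _).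

Lemma proj1_sig_inj (A : Type) (P : A -> Prop) : injective (@proj1_sig A P).
Proof. by move=> u v; apply: eq_sig_hprop => x p q; apply: proof_irrelevance. Qed.

Lemma card_le_refl (A : Type) : card_le A A.
Proof. by exists id. Qed.

Lemma card_le_trans (A B C : Type) : card_le A B -> card_le B C -> card_le A C.
Proof. by move=> [f f_inj] [g g_inj]; exists (g \o f) => x y /g_inj /f_inj. Qed.

Lemma card_le_sig (A : Type) (P : A -> Prop) : card_le {x | P x} A.
Proof. exists (@proj1_sig A P); exact: proj1_sig_inj. Qed.

Lemma card_le_prod (A B A' B' : Type) :
  card_le A A' -> card_le B B' -> card_le (A * B) (A' * B').
Proof.
move=> [f f_inj] [g g_inj]; exists (fun p => (f p.1, g p.2)).
by move=> [x1 x2] [y1 y2] [/f_inj -> /g_inj ->].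
Qed.

Lemma card_le_sigT (D W : Type) (P : D -> Type) :
  (forall d, card_le (P d) W) -> card_le {d : D & P d} (D * W).
Proof.
move=> P_le_W.
have {}P_le_W d : exists h : P d -> W, injective h := P_le_W d.
pose h d := proj1_sig (cid (P_le_W d)).
have h_inj d : injective (h d) := proj2_sig (cid (P_le_W d)).
exists (fun x => (projT1 x, h _ (projT2 x))).
by move=> [d p] [d' p'] /= [ed]; subst d' => /h_inj ->.
Qed.

Lemma card_le_option (W : Type) (a b : W) :
  a <> b -> card_le (option W) (W * W).
Proof.
move=> ab; exists (fun o => if o is Some w then (b, w) else (a, a)).
by move=> [x|] [y|] //= [] => [-> | /esym | ].
Qed.

Lemma card_le_nat_pair : card_le (nat * nat) nat.
Proof. exists pickle; exact: pcan_inj pickleK. Qed.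

Lemma exists_not_in_list (T : Type) (l : list T) : card_le nat T -> exists t, ~ In t l.
Proof.
move=> [f f_inj]; apply: NNPP => covered.
have nodup : NoDup (List.map f (List.seq 0 (length l).+1)).
  exact: Injective_map_NoDup f_inj (seq_NoDup _ _).
have incl_l : incl (List.map f (List.seq 0 (length l).+1)) l.
  by move=> t _; apply: NNPP => t_notin; apply: covered; exists t.
by have := NoDup_incl_length nodup incl_l; rewrite length_map length_seq => /leP; rewrite ltnn.
Qed.

Definition trichotomous (X : Type) (R : X -> X -> Prop) : Prop :=
  forall x y, x = y \/ R x y \/ R y x.

Definition le_of (X : Type) (R : X -> X -> Prop) (x y : X) : Prop := x = y \/ R x y.

Lemma wf_irrefl (X : Type) (R : X -> X -> Prop) : well_founded R -> forall x, ~ R x x.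
Proof. move=> R_wf x; elim: (R_wf x) => y _ IH Ryy; exact: (IH _ Ryy Ryy). Qed.

Definition lex (A B : Type) (RA : A -> A -> Prop) (RB : B -> B -> Prop) (p q : A * B) :=
  RA p.1 q.1 \/ (p.1 = q.1 /\ RB p.2 q.2).

Lemma wf_lex (A B : Type) (RA : A -> A -> Prop) (RB : B -> B -> Prop) :
  well_founded RA -> well_founded RB -> well_founded (lex RA RB).
Proof.
move=> RA_wf RB_wf [a b]; elim: (RA_wf a) b => {}a _ IHa b.
elim: (RB_wf b) => {}b _ IHb; constructor => -[a' b'] [/IHa //|[/= ea]].
by subst a'; apply: IHb.
Qed.

Lemma lex_trichotomous (A B : Type) (RA : A -> A -> Prop) (RB : B -> B -> Prop) :
  trichotomous RA -> trichotomous RB -> trichotomous (lex RA RB).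
Proof.
move=> RA_tri RB_tri [a b] [a' b']; rewrite /lex /=.
case: (RA_tri a a') => [<-|]; last by case; tauto.
by case: (RB_tri b b') => [<-|]; tauto.
Qed.

Lemma trichotomous_preimage (X Y : Type) (f : X -> Y) (R : Y -> Y -> Prop) :
  injective f -> trichotomous R -> trichotomous (fun x y => R (f x) (f y)).
Proof. by move=> f_inj R_tri x y; case: (R_tri (f x) (f y)) => [/f_inj|]; auto. Qed.

(** * Successor cardinals *)

Section SuccessorCardinal.

Variables (W T : Type) (prec : T -> T -> Prop).
Hypotheses (W_square : card_le (W * W) W) (nat_le_W : card_le nat W).
Hypotheses (prec_trans : forall x y z, prec x y -> prec y z -> prec x z)
  (prec_tri : trichotomous prec) (prec_wf : well_founded prec).
Hypotheses (segment_le_W : forall t, card_le {x | prec x t} W) (T_gt_W : ~ card_le T W).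

Lemma card_le_closed_segment (t : T) : card_le {x | le_of prec x t} W.
Proof.
have [f f_inj] := nat_le_W; have [g g_inj] := segment_le_W t.
have f01 : f 0 <> f 1 by move/f_inj.
apply: card_le_trans (card_le_trans (card_le_option f01) W_square).
exists (fun x : {x | le_of prec x t} =>
  match excluded_middle_informative (prec (sval x) t) with
  | left p => Some (g (exist _ _ p)) | right _ => None end).
move=> [x x_le] [y y_le] /=.
case: excluded_middle_informative => [px|npx];
  case: excluded_middle_informative => [py|npy] //= e; apply: proj1_sig_inj => /=.
- by case: e => /g_inj [].
- by case: x_le y_le => [->|//] [->|].
Qed.

(** Regularity of the successor cardinal [T]. *)
Lemma bounded_family (D : Type) (g : D -> T) :
  card_le D W -> exists t, forall d, prec (g d) t.
Proof.
move=> D_le_W; apply: NNPP => unbounded.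
have cover t : exists d, le_of prec t (g d).
  apply: NNPP => not_below; apply: unbounded; exists t => d.
  by case: (prec_tri (g d) t) => [e|[//|t_gd]]; case: not_below; exists d; [left|right].
pose d t := proj1_sig (cid (cover t)).
apply: T_gt_W; apply: card_le_trans W_square.
apply: card_le_trans (card_le_prod D_le_W (card_le_refl W)).
apply: card_le_trans (card_le_sigT (fun d => card_le_closed_segment (g d))).
exists (fun t => existT _ (d t) (exist _ t (proj2_sig (cid (cover t))))).
by move=> t t' /(f_equal (fun x => proj1_sig (projT2 x))).
Qed.

(** Transfinite recursion sending each [x] above the images of its predecessors. *)
Lemma well_ordered_card_le (X : Type) (R : X -> X -> Prop) :
  well_founded R -> trichotomous R ->
  (forall x, card_le {y | R y x} W) -> card_le X T.
Proof.
move=> R_wf R_tri segment_le.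
pose bound x (g : {y | R y x} -> T) := bounded_family g (segment_le x).
pose F x (rec : forall y, R y x -> T) :=
  proj1_sig (cid (bound x (fun y => rec (proj1_sig y) (proj2_sig y)))).
pose f := Fix R_wf (fun _ => T) F.
have f_eq x : f x = F x (fun y _ => f y).
  apply: Fix_eq => z r r' e; suff -> : r = r' by [].
  by do 2 apply: functional_extensionality_dep => ?; apply: e.
have f_mono x y : R y x -> prec (f y) (f x).
  by move=> Ryx; rewrite (f_eq x); exact: (proj2_sig (cid (bound x _)) (exist _ y Ryx)).
exists f => x y fxy; have prec_irr := wf_irrefl prec_wf.
by case: (R_tri x y) => [//|[/f_mono|/f_mono]]; rewrite fxy => /prec_irr.
Qed.

Lemma nat_card_le : card_le nat T.
Proof.
apply: (well_ordered_card_le Wf_nat.lt_wf) => [x y|x].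
  by case: (ltngtP x y) => [/ltP|/ltP|->]; auto.
exact: card_le_trans (card_le_sig _) nat_le_W.
Qed.

Lemma exists_not_in_lists (Y : Type) (LL : Y -> list T) :
  card_le Y W -> exists t, forall y, ~ In t (LL y).
Proof.
move=> Y_le_W; apply: NNPP => covered.
have index t : exists yi : Y * nat, nth_error (LL yi.1) yi.2 = Some t.
  have [y t_in] : exists y, In t (LL y).
    by apply: NNPP => t_free; apply: covered; exists t => y t_in; apply: t_free; exists y.
  by have [i ei] := In_nth_error _ _ t_in; exists (y, i).
apply: T_gt_W; apply: card_le_trans W_square.
apply: card_le_trans (card_le_prod Y_le_W nat_le_W).
exists (fun t => proj1_sig (cid (index t))) => t t' e.
by have := proj2_sig (cid (index t)); rewrite e (proj2_sig (cid (index t'))) => -[].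
Qed.

Definition max_of (a b : T) : T :=
  if excluded_middle_informative (prec a b) then b else a.

Lemma le_max_of_l a b : le_of prec a (max_of a b).
Proof.
by rewrite /max_of; case: (excluded_middle_informative (prec a b)) => [ab|nab]; [right|left].
Qed.

Lemma le_max_of_r a b : le_of prec b (max_of a b).
Proof.
rewrite /max_of; case: (excluded_middle_informative (prec a b)) => [ab|nab]; first by left.
by case: (prec_tri a b) => [e|[ab|ba]]; [left | case: nab | right].
Qed.

Lemma le_of_trans x y z : le_of prec x y -> le_of prec y z -> le_of prec x z.
Proof. by move=> [->|xy] [<-|yz]; rewrite /le_of; eauto. Qed.

(** Goedel's ordering of pairs: by maximum, then lexicographically. *)
Definition max_lex (p q : T * T) : Prop :=
  lex prec (lex prec prec) (max_of p.1 p.2, p) (max_of q.1 q.2, q).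

Lemma max_lex_segment p q :
  max_lex q p -> le_of prec q.1 (max_of p.1 p.2) /\ le_of prec q.2 (max_of p.1 p.2).
Proof.
move=> qp; have q_max : le_of prec (max_of q.1 q.2) (max_of p.1 p.2).
  by case: qp => [|[]]; rewrite /le_of; auto.
by split; apply: le_of_trans q_max; [apply: le_max_of_l | apply: le_max_of_r].
Qed.

Lemma card_le_square : card_le (T * T) T.
Proof.
pose key p := (max_of p.1 p.2, p).
have key_inj : injective key by move=> p q /(f_equal snd).
apply: (well_ordered_card_le (R := max_lex)).
- exact: wf_inverse_image _ _ _ key (wf_lex prec_wf (wf_lex prec_wf prec_wf)).
- apply: trichotomous_preimage key_inj _.
  exact: lex_trichotomous prec_tri (lex_trichotomous prec_tri prec_tri).
move=> p; set m := max_of p.1 p.2.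
apply: card_le_trans W_square.
apply: card_le_trans (card_le_prod (card_le_closed_segment m) (card_le_closed_segment m)).
exists (fun q : {q | max_lex q p} =>
  (exist (le_of prec^~ m) _ (proj1 (max_lex_segment (proj2_sig q))),
   exist (le_of prec^~ m) _ (proj2 (max_lex_segment (proj2_sig q))))).
by move=> [[x1 x2] ?] [[y1 y2] ?] [e1 e2]; apply: proj1_sig_inj; rewrite /= e1 e2.
Qed.

End SuccessorCardinal.

(** * Arithmetic of alephs *)

Record aleph_laws (k : nat) : Prop := AlephLaws {
  aleph_square : forall V, is_aleph k V -> card_le (V * V) V;
  aleph_comparable : forall U V, is_aleph k U -> is_aleph k V -> card_le U V;
  aleph_infinite : forall V, is_aleph k V -> card_le nat V }.

Lemma aleph0_card (V : Type) : is_aleph 0 V -> card_le V nat /\ card_le nat V.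
Proof.
move=> [f [f_inj f_surj]]; split; last by exists f.
exists (fun v => proj1_sig (cid (f_surj v))) => x y e.
by rewrite -(proj2_sig (cid (f_surj x))) e (proj2_sig (cid (f_surj y))).
Qed.

Lemma aleph_laws0 : aleph_laws 0.
Proof.
split=> [V | U V | V] /aleph0_card [V_nat nat_V]; last by [].
- exact: card_le_trans (card_le_prod V_nat V_nat) (card_le_trans card_le_nat_pair nat_V).
- by move=> /aleph0_card [_ nat_U]; exact: card_le_trans nat_U.
Qed.

Lemma aleph_succ_order k (W T : Type) :
  aleph_laws k -> is_aleph k W -> is_aleph k.+1 T ->
  exists prec : T -> T -> Prop, well_order prec /\
    (forall t, card_le {x | prec x t} W) /\ ~ card_le T W.
Proof.
move=> lawsk W_aleph [prec [prec_wo [segment T_big]]]; exists prec; split=> //; split.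
  move=> t; have [U [U_aleph seg_le_U]] := segment t.
  exact: card_le_trans seg_le_U (aleph_comparable lawsk U_aleph W_aleph).
by move=> T_le_W; apply: T_big; exists W.
Qed.

Lemma aleph_laws_succ k (W : Type) : aleph_laws k -> is_aleph k W -> aleph_laws k.+1.
Proof.
move=> lawsk W_aleph.
have W_square := aleph_square lawsk W_aleph; have nat_W := aleph_infinite lawsk W_aleph.
split=> [V | U V | V] V_aleph.
- have [prec [[tr [tri wf]] [seg big]]] := aleph_succ_order lawsk W_aleph V_aleph.
  exact: card_le_square W_square nat_W tr tri wf seg big.
- move=> V'_aleph.
  have [precU [[_ [triU wfU]] [segU _]]] := aleph_succ_order lawsk W_aleph V_aleph.
  have [prec [[_ [tri wf]] [seg big]]] := aleph_succ_order lawsk W_aleph V'_aleph.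
  exact (well_ordered_card_le W_square nat_W tri wf seg big wfU triU segU).
- have [prec [[_ [tri wf]] [seg big]]] := aleph_succ_order lawsk W_aleph V_aleph.
  exact: nat_card_le W_square nat_W tri wf seg big.
Qed.

Lemma aleph_laws_upto k : (forall j, j < k -> exists W, is_aleph j W) -> aleph_laws k.
Proof.
elim: k => [|k IH] alephs; first exact: aleph_laws0.
have [W W_aleph] := alephs k (ltnSn k).
by apply: aleph_laws_succ W_aleph; apply: IH => j /ltnW /alephs.
Qed.

Lemma aleph_le_succ k (V T : Type) :
  aleph_laws k -> is_aleph k V -> is_aleph k.+1 T -> card_le V T.
Proof.
move=> lawsk V_aleph T_aleph.
have V_square := aleph_square lawsk V_aleph; have nat_V := aleph_infinite lawsk V_aleph.
have [prec [[_ [tri wf]] [seg big]]] := aleph_succ_order lawsk V_aleph T_aleph.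
case: k lawsk V_aleph {T_aleph} V_square nat_V seg big => [|k] _ V_aleph V_square nat_V seg big.
  exact: card_le_trans (proj1 (aleph0_card V_aleph)) (nat_card_le V_square nat_V tri wf seg big).
have [precV [[_ [triV wfV]] _]] := V_aleph.
exact (well_ordered_card_le V_square nat_V tri wf seg big wfV triV (fun=> card_le_sig _)).
Qed.

(** * Free points *)

Lemma proj_omit_dfwith n (S : 'I_n -> Type) (i : 'I_n) (s : prodS S) (x : S i) :
  @proj_omit _ _ i (dfwith s x) = @proj_omit _ _ i s.
Proof.
apply: functional_extensionality_dep => -[j ji].
by rewrite /proj_omit /= dfwith_out // eq_sym.
Qed.

Lemma eq_dfwith (I : eqType) (T_ : I -> Type) (f g : forall j, T_ j) (i : I) (x : T_ i) :
  dfwith f x = dfwith g x -> f i = g i -> f = g.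
Proof.
move=> e ei; apply: functional_extensionality_dep => j.
case: (eqVneq i j) => [<- //|ij].
by have := f_equal (fun h => h j) e; rewrite /= !dfwith_out.
Qed.

Section FreePoint.

Variables (n : nat) (S : 'I_n -> Type).
Hypothesis S_aleph : forall i : 'I_n, is_aleph i (S i).

Lemma S_laws (i : 'I_n) : aleph_laws i.
Proof.
apply: aleph_laws_upto => j lt_ji.
by exists (S (Ordinal (ltn_trans lt_ji (ltn_ord i)))); apply: S_aleph.
Qed.

Definition agree_from (m : nat) (c s : prodS S) : Prop :=
  forall j : 'I_n, m <= j -> s j = c j.

Definition box (m : nat) (c : prodS S) : Type := {s : prodS S | agree_from m c s}.

Lemma agree_from_reset m (i : 'I_n) c s :
  val i = m -> agree_from m.+1 c s -> agree_from m c (dfwith s (c i)).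
Proof.
move=> im agree j le_mj; case: (eqVneq i j) => [<-|ij]; first by rewrite dfwith_in.
by rewrite dfwith_out // agree // ltn_neqAle le_mj andbT -im.
Qed.

Lemma agree_from_dfwith m (i : 'I_n) c (t : S i) s :
  val i = m -> agree_from m (dfwith c t) s -> agree_from m.+1 c s.
Proof.
move=> im agree j lt_mj; rewrite agree ?dfwith_out //; last exact: ltnW.
by apply: contraTneq lt_mj => <-; rewrite im ltnn.
Qed.

Lemma card_le_box m (lt_mn : m < n) (c : prodS S) :
  card_le (box m.+1 c) (S (Ordinal lt_mn)).
Proof.
elim: m lt_mn => [|m IH] lt_mn.
  exists (fun s : box 1 c => proj1_sig s (Ordinal lt_mn)) => s s' e.
  apply: proj1_sig_inj; apply: functional_extensionality_dep => j.
  case: (eqVneq j (Ordinal lt_mn)) => [-> //|j0].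
  have j_ge1 : 0 < j by rewrite lt0n; apply: contra_neq j0 => j0; apply: val_inj.
  by rewrite (proj2_sig s j j_ge1) (proj2_sig s' j j_ge1).
set i := Ordinal lt_mn; have laws_i := S_laws i.
have S_m_le_S_i := aleph_le_succ (S_laws (Ordinal (ltnW lt_mn))) (S_aleph _) (S_aleph i).
apply: card_le_trans (aleph_square laws_i (S_aleph i)).
apply: card_le_trans (card_le_prod (card_le_trans (IH _) S_m_le_S_i) (card_le_refl _)).
pose reset (s : box m.+2 c) : box m.+1 c :=
  exist _ _ (agree_from_reset (i := i) erefl (proj2_sig s)).
exists (fun s => (reset s, proj1_sig s i)) => s s' [e ei].
by apply: proj1_sig_inj; apply: eq_dfwith e ei.
Qed.

Variable L : forall i : 'I_n, prodS_omit S i -> list (S i).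

Lemma exists_free_value (i : 'I_n) (c : prodS S) :
  exists t : S i, forall y : box i c, ~ In t (L (@proj_omit _ _ i (proj1_sig y))).
Proof.
case: i => [[|m] lt_mn].
  have nat_le_S := aleph_infinite (S_laws (Ordinal lt_mn)) (S_aleph _).
  have [t t_free] := exists_not_in_list (L (@proj_omit _ _ (Ordinal lt_mn) c)) nat_le_S.
  exists t => y; suff -> : proj1_sig y = c by [].
  by apply: functional_extensionality_dep => j; apply: (proj2_sig y).
have laws_m := S_laws (Ordinal (ltnW lt_mn)).
have [prec [[_ [tri wf]] [seg big]]] :=
  aleph_succ_order laws_m (S_aleph (Ordinal (ltnW lt_mn))) (S_aleph (Ordinal lt_mn)).
exact (exists_not_in_lists (aleph_square laws_m (S_aleph _)) (aleph_infinite laws_m (S_aleph _))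
  big _ (card_le_box (ltnW lt_mn) c)).
Qed.

Lemma free_point_from m : m <= n -> forall c : prodS S, exists s : prodS S,
  agree_from m c s /\ forall j : 'I_n, j < m -> ~ In (s j) (L (@proj_omit _ _ j s)).
Proof.
elim: m => [|m IH] le_mn c; first by exists c; split.
pose i := Ordinal le_mn.
have [t t_free] := exists_free_value i c.
have [s [agree free]] := IH (ltnW le_mn) (dfwith c t).
have s_i : s i = t by rewrite agree // dfwith_in.
exists s; split; first exact: (agree_from_dfwith (i := i) erefl agree).
move=> j; rewrite ltnS leq_eqVlt => /predU1P [ji|]; last exact: free.
have -> : j = i by apply: val_inj.
rewrite s_i -(proj_omit_dfwith s (c i)).
have agree_m := agree_from_dfwith (i := i) erefl agree.
exact: (t_free (exist _ _ (agree_from_reset (i := i) erefl agree_m))).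
Qed.

Theorem free_point : exists s : prodS S, forall i, ~ In (s i) (L (@proj_omit _ _ i s)).
Proof.
have S_inhabited i : exists x : S i, True.
  by have [f _] := aleph_infinite (S_laws i) (S_aleph i); exists (f 0).
have [s [_ free]] := free_point_from (leqnn n) (fun i => proj1_sig (cid (S_inhabited i))).
by exists s => i; apply: free.
Qed.

End FreePoint.

Lemma preimage_list (A B : Type) (e : A -> B) : injective e ->
  forall l : list B, exists l' : list A, forall a, In (e a) l -> In a l'.
Proof.
move=> e_inj; elim=> [|b l [l' l'_pre]]; first by exists nil.
case: (classic (exists a, e a = b)) => [[a0 e_a0]|no_pre].
  by exists (a0 :: l') => a [e_a|/l'_pre]; [left; apply: e_inj; rewrite e_a0 | right].
exists l' => a [e_a|/l'_pre //]; case: no_pre; by exists a.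
Qed.

(** Kuratowski's free set theorem, reduced to the case [|S_i| = aleph_i] by
  pulling the forbidden sets back along injections [aleph_i -> S_i]. *)
Theorem free_point_ge_aleph n (S : 'I_n -> Type) :
  (forall i : 'I_n, ge_aleph i (S i)) ->
  forall L : forall i : 'I_n, prodS_omit S i -> list (S i),
  exists s : prodS S, forall i, ~ In (s i) (L i (@proj_omit _ _ i s)).
Proof.
move=> S_ge L.
have pick (i : 'I_n) : {U : Type & (is_aleph i U * {e : U -> S i | injective e})%type}.
  have [U U_aleph] := cid (S_ge i).
  by exists U; split; [exact: proj1 U_aleph | exact: cid (proj2 U_aleph)].
pose U i := projT1 (pick i); pose e i : U i -> S i := proj1_sig (projT2 (pick i)).2.
have e_inj i : injective (e i) := proj2_sig (projT2 (pick i)).2.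
pose L' i (x : prodS_omit U i) :=
  proj1_sig (cid (preimage_list (e_inj i) (L i (fun j => e (val j) (x j))))).
have [s s_free] := free_point (fun i => (projT2 (pick i)).1) L'.
exists (fun i => e i (s i)) => i s_i_in; apply: (s_free i).
exact: (proj2_sig (cid (preimage_list (e_inj i) _))).
Qed.

Theorem mainTheorem4 (R : pzRingType) (n : nat) (S : 'I_n -> Type)
  (hS : forall i : 'I_n, ge_aleph (val i) (S i))
  (v : forall i : 'I_n, prodS_omit S i -> (prodS S -> R))
  (hv : forall (i : 'I_n) (x : prodS_omit S i), fin_supp (v i x)) :
  exists s : prodS S, forall i : 'I_n, v i (@proj_omit n S i s) s = 0%R.
Proof.
pose L i x := List.map (fun z : prodS S => z i) (proj1_sig (cid (hv i x))).
have [s s_free] := free_point_ge_aleph hS L.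
exists s => i; apply: NNPP => v_nz; apply: (s_free i).
exact: List.in_map (proj2_sig (cid (hv i _)) s v_nz).
Qed.
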